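(* Let $\mathbf A$ be a residuated semigroup satisfying $1_xy=y1_x$ for all $x,y$, where $1_x:=x/x$. Consider the conditions (each required for all $x,y\in A$): (H1) if $1_x=1_y$ then $1_{xy}=1_x$; (H2) if $1_x=1_y$ then $1_{x/y}=1_x$; (H3) if $1_x=1_y$ then $1_{x\backslash y}=1_x$. Then each of (H2) and (H3) implies that $x\backslash x=x/x$ for all $x\in A$; moreover (H2) and (H3) are equivalent, and (H2) implies (H1).
   Context: A residuated semigroup is a structure $\langle A,\le,\cdot,\backslash,/\rangle$ where $\langle A,\le\rangle$ is a poset, $\langle A,\cdot\rangle$ is a semigroup (we write $xy$ for $x\cdot y$), and for all $x,y,z$: $xy\le z\iff x\le z/y\iff y\le x\backslash z$. *)

Record RSG := {
  car :> Type;
  le : car -> car -> Prop;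
  mul : car -> car -> car;
  ldiv : car -> car -> car;
  rdiv : car -> car -> car;
  le_refl : forall x, le x x;
  le_antisym : forall x y, le x y -> le y x -> x = y;
  le_trans : forall x y z, le x y -> le y z -> le x z;
  mul_assoc : forall x y z, mul (mul x y) z = mul x (mul y z);
  res_r : forall x y z, le (mul x y) z <-> le x (rdiv z y);
  res_l : forall x y z, le (mul x y) z <-> le y (ldiv x z)
}.

Definition one_ {A : RSG} (x : A) : A := rdiv A x x.

Definition H1 (A : RSG) : Prop :=
  forall x y : A, one_ x = one_ y -> one_ (mul A x y) = one_ x.
Definition H2 (A : RSG) : Prop :=
  forall x y : A, one_ x = one_ y -> one_ (rdiv A x y) = one_ x.
Definition H3 (A : RSG) : Prop :=
  forall x y : A, one_ x = one_ y -> one_ (ldiv A x y) = one_ x.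

(* Write [e := x/x].  Since units are central, [e <= x\x]; conversely [x\x] is
   below its own unit, so [x\x = e] as soon as that unit is [e], which is what
   (H2) (via [1_e = e]) and (H3) provide.  For the remaining implications the
   element [c := e/x] (resp. [c := y\e]) also has unit [e] under (H2) (resp. (H3)),
   and the unit of [xy], [x\y] or [x/y] is squeezed between [e] and [c/c]. *)

From Stdlib Require Import Setoid.

Section Residuated.
Variable A : RSG.

Local Notation "a <= b" := (le A a b).
Local Notation "a * b" := (mul A a b).
Local Notation "a / b" := (rdiv A a b).
Local Notation "a \ b" := (ldiv A a b) (at level 40, left associativity).

Lemma le_rdiv_of_mul_le (a b c : A) : a * b <= c -> a <= c / b.
Proof. apply res_r. Qed.

Lemma le_ldiv_of_mul_le (a b c : A) : a * b <= c -> b <= a \ c.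
Proof. apply res_l. Qed.

Lemma mul_rdiv_le (z y : A) : (z / y) * y <= z.
Proof. apply res_r, le_refl. Qed.

Lemma mul_ldiv_le (x z : A) : x * (x \ z) <= z.
Proof. apply res_l, le_refl. Qed.

Lemma mul_le_compat_l (a b c : A) : a <= b -> c * a <= c * b.
Proof.
  intro hab; apply res_l, le_trans with b; [exact hab |].
  apply le_ldiv_of_mul_le, le_refl.
Qed.

Lemma mul_le_compat_r (a b c : A) : a <= b -> a * c <= b * c.
Proof.
  intro hab; apply res_r, le_trans with b; [exact hab |].
  apply le_rdiv_of_mul_le, le_refl.
Qed.

Lemma one_mul_le (x : A) : one_ x * x <= x.
Proof. apply mul_rdiv_le. Qed.

Lemma ldiv_self_le_one (x : A) : x \ x <= one_ (x \ x).
Proof.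
  apply le_rdiv_of_mul_le, le_ldiv_of_mul_le; rewrite <- mul_assoc.
  apply le_trans with (x * (x \ x)); [apply mul_le_compat_r |]; apply mul_ldiv_le.
Qed.

Lemma one_le_one_mul (x y : A) : one_ x <= one_ (x * y).
Proof.
  apply le_rdiv_of_mul_le; rewrite <- mul_assoc.
  apply mul_le_compat_r, one_mul_le.
Qed.

Lemma one_le_one_rdiv (x y : A) : one_ x <= one_ (x / y).
Proof.
  apply le_rdiv_of_mul_le, le_rdiv_of_mul_le; rewrite mul_assoc.
  apply le_trans with (one_ x * x); [apply mul_le_compat_l, mul_rdiv_le | apply one_mul_le].
Qed.

Section CentralUnits.
Hypothesis one_central : forall x y : A, one_ x * y = y * one_ x.

Lemma mul_one_le (x : A) : x * one_ x <= x.
Proof. rewrite <- one_central; apply one_mul_le. Qed.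

Lemma one_le_ldiv_self (x : A) : one_ x <= x \ x.
Proof. apply le_ldiv_of_mul_le, mul_one_le. Qed.

Lemma one_le_one_ldiv (x y : A) : one_ x = one_ y -> one_ x <= one_ (x \ y).
Proof.
  intro hxy; apply le_rdiv_of_mul_le, le_ldiv_of_mul_le.
  rewrite <- mul_assoc, <- one_central, mul_assoc.
  apply le_trans with (one_ x * y); [apply mul_le_compat_l, mul_ldiv_le |].
  rewrite hxy; apply one_mul_le.
Qed.

Lemma ldiv_self_of_one_one (x : A) : one_ (one_ x) = one_ x -> x \ x = one_ x.
Proof.
  intro hee; set (e := one_ x) in *; set (f := one_ (x \ x)).
  assert (fe_le_ldiv : f * e <= x \ x).
  { apply le_trans with (f * (x \ x)); [apply mul_le_compat_l, one_le_ldiv_self |].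
    apply mul_rdiv_le. }
  assert (f_le_e : f <= e).
  { rewrite <- hee; apply le_rdiv_of_mul_le, le_rdiv_of_mul_le.
    (* [f] and [e] are central, so [f e x = x (f e)]. *)
    rewrite mul_assoc; unfold e; rewrite one_central, <- mul_assoc.
    unfold f; rewrite one_central, mul_assoc.
    apply le_trans with (x * (x \ x)); [apply mul_le_compat_l, fe_le_ldiv | apply mul_ldiv_le]. }
  apply le_antisym; [| apply one_le_ldiv_self].
  apply le_trans with f; [apply ldiv_self_le_one | exact f_le_e].
Qed.

Lemma H2_one_one (h2 : H2 A) (x : A) : one_ (one_ x) = one_ x.
Proof. exact (h2 x x eq_refl). Qed.

Lemma H2_ldiv_self (h2 : H2 A) (x : A) : x \ x = one_ x.
Proof. apply ldiv_self_of_one_one, H2_one_one, h2. Qed.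

Lemma H3_ldiv_self (h3 : H3 A) (x : A) : x \ x = one_ x.
Proof.
  apply le_antisym; [| apply one_le_ldiv_self].
  rewrite <- (h3 x x eq_refl); apply ldiv_self_le_one.
Qed.

Lemma H2_one_rdiv_one (h2 : H2 A) (x : A) : one_ (one_ x / x) = one_ x.
Proof.
  rewrite <- (H2_one_one h2 x) at 2; apply h2, H2_one_one, h2.
Qed.

Lemma H3_one_ldiv_one (h3 : H3 A) (x : A) : one_ (x \ one_ x) = one_ x.
Proof.
  apply h3; rewrite <- (H3_ldiv_self h3 x) at 2.
  symmetry; apply h3; reflexivity.
Qed.

Lemma H2_H1 (h2 : H2 A) : H1 A.
Proof.
  intros x y hxy; pose proof (H2_one_rdiv_one h2 x) as one_c.
  set (e := one_ x) in *; set (c := e / x) in *.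
  apply le_antisym; [| apply one_le_one_mul].
  rewrite <- one_c.
  apply le_rdiv_of_mul_le, le_rdiv_of_mul_le; rewrite hxy.
  apply le_rdiv_of_mul_le; rewrite one_central, !mul_assoc.
  apply le_trans with (c * (x * y)); [apply mul_le_compat_l, mul_rdiv_le |].
  rewrite <- mul_assoc; apply le_trans with (e * y); [apply mul_le_compat_r, mul_rdiv_le |].
  rewrite hxy; apply one_mul_le.
Qed.

Lemma H2_H3 (h2 : H2 A) : H3 A.
Proof.
  intros x y hxy; pose proof (H2_one_rdiv_one h2 x) as one_c.
  pose proof (H2_ldiv_self h2 x) as ldiv_self.
  set (e := one_ x) in *; set (z := x \ y); set (f := one_ z).
  set (c := e / x) in *.
  assert (xc_le : x * c <= e).
  { apply le_rdiv_of_mul_le; rewrite mul_assoc.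
    apply le_trans with (x * e); [apply mul_le_compat_l, mul_rdiv_le | apply mul_one_le]. }
  assert (cy_le : c * y <= z).
  { apply le_ldiv_of_mul_le; rewrite <- mul_assoc.
    apply le_trans with (e * y); [apply mul_le_compat_r, xc_le |].
    rewrite hxy; apply one_mul_le. }
  assert (ldiv_le_c : x \ e <= c).
  { apply le_rdiv_of_mul_le, le_trans with (x \ x); [| rewrite ldiv_self; apply le_refl].
    apply le_ldiv_of_mul_le; rewrite <- mul_assoc.
    apply le_trans with (e * x); [apply mul_le_compat_r, mul_ldiv_le | apply one_mul_le]. }
  apply le_antisym; [| apply one_le_one_ldiv, hxy].
  rewrite <- one_c.
  apply le_rdiv_of_mul_le, le_trans with (x \ e); [| exact ldiv_le_c].
  apply le_ldiv_of_mul_le; rewrite hxy; apply le_rdiv_of_mul_le.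
  rewrite <- mul_assoc, !mul_assoc.
  apply le_trans with (x * (f * z)); [do 2 apply mul_le_compat_l; exact cy_le |].
  apply le_trans with (x * z); [apply mul_le_compat_l, mul_rdiv_le | apply mul_ldiv_le].
Qed.

Lemma H3_H2 (h3 : H3 A) : H2 A.
Proof.
  intros x y hxy; rewrite hxy.
  pose proof (H3_ldiv_self h3 x) as ldiv_self_x; rewrite hxy in ldiv_self_x.
  pose proof (H3_ldiv_self h3 y) as ldiv_self_y.
  pose proof (H3_one_ldiv_one h3 y) as one_c.
  pose proof (H3_ldiv_self h3 (y \ one_ y)) as ldiv_self_c; rewrite one_c in ldiv_self_c.
  pose proof (mul_one_le x) as xe_le; rewrite hxy in xe_le.
  set (e := one_ y) in *; set (c := y \ e) in *; set (z := x / y); set (f := one_ z).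
  assert (cy_le : c * y <= e).
  { rewrite <- ldiv_self_y; apply le_ldiv_of_mul_le; rewrite <- mul_assoc.
    apply le_trans with (e * y); [apply mul_le_compat_r, mul_ldiv_le | apply one_mul_le]. }
  assert (xc_le : x * c <= z).
  { apply le_rdiv_of_mul_le; rewrite mul_assoc.
    apply le_trans with (x * e); [apply mul_le_compat_l, cy_le | exact xe_le]. }
  assert (rdiv_le_c : e / y <= c).
  { apply le_ldiv_of_mul_le, le_rdiv_of_mul_le; rewrite mul_assoc.
    apply le_trans with (y * e); [apply mul_le_compat_l, mul_rdiv_le | apply mul_one_le]. }
  apply le_antisym; [| rewrite <- hxy; apply one_le_one_rdiv].
  rewrite <- ldiv_self_c.
  apply le_ldiv_of_mul_le, le_trans with (e / y); [| exact rdiv_le_c].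
  apply le_rdiv_of_mul_le; rewrite <- ldiv_self_x.
  apply le_ldiv_of_mul_le; rewrite <- !mul_assoc, mul_assoc.
  apply le_trans with (z * (f * y)); [apply mul_le_compat_r, xc_le |].
  rewrite <- mul_assoc; unfold f; rewrite <- one_central.
  apply le_trans with (z * y); [apply mul_le_compat_r, one_mul_le | apply mul_rdiv_le].
Qed.

End CentralUnits.
End Residuated.

Theorem proposition3p4 (A : RSG)
  (hcomm : forall x y : A, mul A (one_ x) y = mul A y (one_ x)) :
  (H2 A -> forall x : A, ldiv A x x = rdiv A x x) /\
  (H3 A -> forall x : A, ldiv A x x = rdiv A x x) /\
  (H2 A <-> H3 A) /\
  (H2 A -> H1 A).
Proof.
  split; [| split; [| split]].
  - exact (H2_ldiv_self A hcomm).
  - exact (H3_ldiv_self A hcomm).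
  - split; [exact (H2_H3 A hcomm) | exact (H3_H2 A hcomm)].
  - exact (H2_H1 A hcomm).
Qed.
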